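(* Let $n\ge 3$, let $d$ be an integer, and let $i,j\in[n-1]$ with $\lvert i-j\rvert=1$. Then \[ b_{n,d}(i,j)=b_{n-2,\,d-1}\quad\text{and}\quad p_{n,d}(i,j)=p_{n-2,\,d-1}. \]
   Context: For a word $w=w_1\cdots w_k$ of pairwise distinct positive integers, an index $t\in[k-1]$ is an ascent if $w_t<w_{t+1}$ and a descent if $w_t>w_{t+1}$; $\operatorname{des}(w)$ is the number of descents and the height is $h(w)=(\#\text{ascents})-(\#\text{descents})$ (so $h(w)=0$ if $k\le 1$). A word is ballot if every prefix has nonnegative height. A ballot permutation of $[n]$ is a permutation $\pi_1\cdots\pi_n$ (one-line notation) that is a ballot word. $\mathscr{B}_{n,d}$ is the set of ballot permutations of $[n]$ with exactly $d$ descents, $b_{n,d}=\lvert\mathscr{B}_{n,d}\rvert$ (so $b_{m,d}=0$ for $d<0$), and $b_{n,d}(i,j)$ is the number of $\pi\in\mathscr{B}_{n,d}$ containing $i\,n\,j$ as a factor, i.e. $\pi_t=i,\pi_{t+1}=n,\pi_{t+2}=j$ for some $t$. A cycle $(c_1c_2\cdots c_k)$ of a permutation means $c_1\mapsto c_2\mapsto\cdots\mapsto c_k\mapsto c_1$. Its cyclic descent number is $\operatorname{cdes}(c)=\lvert\{t\in[k]: c_t>c_{t+1}\}\rvert$ and cyclic ascent number $\operatorname{casc}(c)=\lvert\{t\in[k]: c_t<c_{t+1}\}\rvert$, where $c_{k+1}=c_1$; its cyclic weight is $w(c)=\min(\operatorname{cdes}(c),\operatorname{casc}(c))$, and the cyclic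 weight $w(\pi)$ of a permutation is the sum of the cyclic weights of its cycles. An odd order permutation is one all of whose cycles have odd length. $\mathscr{P}_{n,d}$ is the set of odd order permutations of $[n]$ with cyclic weight $d$, $p_{n,d}=\lvert\mathscr{P}_{n,d}\rvert$, and $p_{n,d}(i,j)$ is the number of $\pi\in\mathscr{P}_{n,d}$ containing $i\,n\,j$ as a cyclic factor, i.e. some cycle of $\pi$, written starting at a suitable element, contains $i,n,j$ consecutively (equivalently $\pi(i)=n$ and $\pi(n)=j$). *)

From mathcomp Require Import all_boot all_order all_algebra.
From mathcomp Require Import perm.
Set Implicit Arguments. Unset Strict Implicit. Unset Printing Implicit Defensive.
Import Order.TTheory GRing.Theory Num.Theory.

Definition adj_pairs (w : seq nat) : seq (nat * nat) := zip w (behead w).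

Definition des (w : seq nat) : nat := count (fun p => p.2 < p.1) (adj_pairs w).
Definition asc (w : seq nat) : nat := count (fun p => p.1 < p.2) (adj_pairs w).

Definition height (w : seq nat) : int := (Posz (asc w)) - (Posz (des w)).

Definition ballot (w : seq nat) : bool :=
  [forall k : 'I_(size w).+1, (0 <= height (take k w))%R].

(* permutations of [n] = {1,...,n} in one-line notation *)
Definition perms_of (n : nat) : seq (seq nat) := permutations (iota 1 n).

(* b_{n,d}; zero for d < 0 *)
Definition b (n : nat) (d : int) : nat :=
  count (fun w => ballot w && ((Posz (des w)) == d)) (perms_of n).

Definition b_ij (n : nat) (d : int) (i j : nat) : nat :=
  count (fun w => [&& ballot w, (Posz (des w)) == d & infix [:: i; n; j] w]) (perms_of n).

(* A permutation of [n] is represented by s : {perm 'I_n}, the element k in [n]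
   being the ordinal k-1 (labels are recovered by adding 1). *)

Definition cycle_of (n : nat) (s : {perm 'I_n}) (x : 'I_n) : seq nat :=
  map (fun y : 'I_n => (val y).+1) (fingraph.orbit s x).

Definition cdes (c : seq nat) : nat := count (fun p => p.2 < p.1) (zip c (rot 1 c)).
Definition casc (c : seq nat) : nat := count (fun p => p.1 < p.2) (zip c (rot 1 c)).
Definition cweight_cycle (c : seq nat) : nat := minn (cdes c) (casc c).

(* x is the least element of its cycle: used to pick each cycle exactly once *)
Definition cycle_rep (n : nat) (s : {perm 'I_n}) (x : 'I_n) : bool :=
  [forall y : 'I_n, fingraph.fconnect s x y ==> (val x <= val y)].

Definition cweight (n : nat) (s : {perm 'I_n}) : nat :=
  \sum_(x : 'I_n | cycle_rep s x) cweight_cycle (cycle_of s x).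

Definition odd_order (n : nat) (s : {perm 'I_n}) : bool :=
  [forall x : 'I_n, odd (size (cycle_of s x))].

(* p_{n,d}; zero for d < 0 *)
Definition p (n : nat) (d : int) : nat :=
  #|[set s : {perm 'I_n} | odd_order s && ((Posz (cweight s)) == d)]|.

(* s contains i n j as a cyclic factor, i.e. s(i) = n and s(n) = j (labels in [n]) *)
Definition cyc_factor (n : nat) (s : {perm 'I_n}) (i j : nat) : bool :=
  [exists x : 'I_n, exists y : 'I_n,
     [&& (val x).+1 == i, (val y).+1 == n, s x == y & (val (s y)).+1 == j]].

Definition p_ij (n : nat) (d : int) (i j : nat) : nat :=
  #|[set s : {perm 'I_n} | [&& odd_order s, (Posz (cweight s)) == d & cyc_factor s i j]]|.

(* Contract the factor i n j to the single letter m = min(i, j) and close up the gap in the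
   remaining letters.  As i and j are consecutive, no other letter lies between them, so every
   comparison with a remaining letter is preserved, and n exceeds everything.  In a ballot
   permutation the factor i n j contributes an ascent immediately followed by a descent;
   deleting such a peak keeps every prefix height nonnegative (in between, the height only rises
   by one) and removes exactly one descent.  In an odd order permutation the cycle through i n j
   loses the ascent i < n and the descent n > j, so its length drops by two and its numbers of
   cyclic ascents and descents drop by one each, unless the cycle is (i n j) itself, which
   becomes the fixed point m, of weight 0 instead of 1.  Re-inserting the factor inverts the
   contraction, so it is a bijection onto the objects counted by b_{n-2,d-1} and p_{n-2,d-1}. *)

From mathcomp Require Import all_boot all_order all_algebra perm zify.
Set Implicit Arguments. Unset Strict Implicit. Unset Printing Implicit Defensive.
Import Order.TTheory GRing.Theory Num.Theory.

Ltac case_ifs := repeat match goal with |- context [if ?b then _ else _] =>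
  lazymatch b with context [if _ then _ else _] => fail | _ => case: (boolP b) => ? end end.

Lemma eq_PoszS (c : nat) (d : int) : (Posz c.+1 == d) = (Posz c == (d - 1)%R).
Proof. by apply/eqP/eqP; lia. Qed.

Lemma uniq_mid (T : eqType) (a c : seq T) x :
  uniq (a ++ x :: c) = (x \notin a ++ c) && uniq (a ++ c).
Proof. by rewrite -cat1s uniq_catCA cat1s cons_uniq. Qed.

Lemma perm_iota1E k x :
  perm_eq x (iota 1 k) = [&& uniq x, size x == k & all (fun v => 0 < v <= k) x].
Proof.
apply/idP/and3P => [x_perm | [uniq_x /eqP size_x range_x]].
  rewrite (perm_uniq x_perm) iota_uniq (perm_size x_perm) size_iota (perm_all _ x_perm).
  by split=> //; apply/allP => v; rewrite mem_iota; lia.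
apply: uniq_perm; rewrite ?iota_uniq //.
have sub : {subset x <= iota 1 k} by move=> v /(allP range_x); rewrite mem_iota; lia.
by have [] := uniq_min_size uniq_x sub; rewrite ?size_iota ?size_x.
Qed.

Lemma count_bijection (T U : eqType) (s : seq T) (t : seq U) (P : pred T) (Q : pred U)
    (f : T -> U) (g : U -> T) :
  uniq s -> uniq t ->
  (forall w, w \in s -> P w -> [/\ f w \in t, Q (f w) & g (f w) = w]) ->
  (forall u, u \in t -> Q u -> [/\ g u \in s, P (g u) & f (g u) = u]) ->
  count P s = count Q t.
Proof.
have count_le (A B : eqType) (a : seq A) (b : seq B) (R : pred A) (S : pred B) h h' :
    uniq a -> (forall x, x \in a -> R x -> [/\ h x \in b, S (h x) & h' (h x) = x]) ->
    count R a <= count S b.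
  move=> uniq_a hR; rewrite -!size_filter -(size_map h); apply: uniq_leq_size.
    rewrite map_inj_in_uniq ?filter_uniq // => x y.
    rewrite !mem_filter => /andP[Rx ax] /andP[Ry ay] hxy.
    by have [_ _ <-] := hR x ax Rx; have [_ _ <-] := hR y ay Ry; rewrite hxy.
  move=> z /mapP[x]; rewrite mem_filter => /andP[Rx ax] ->.
  by have [bh Sh _] := hR x ax Rx; rewrite mem_filter Sh.
move=> uniq_s uniq_t fP gQ; apply/eqP; rewrite eqn_leq.
by rewrite (count_le _ _ _ _ _ _ f g) ?(count_le _ _ _ _ _ _ g f).
Qed.

Lemma count_uniq_card (T : finType) (c : seq T) (P : pred T) :
  uniq c -> count P c = #|[pred z | (z \in c) && P z]|.
Proof.
move=> uniq_c; rewrite -size_filter -(card_uniqP (filter_uniq P uniq_c)).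
by apply: eq_card => z; rewrite mem_filter !inE andbC.
Qed.

Lemma rot1_orbit (T : finType) (s : {perm T}) x :
  rot 1 (orbit s x) = map s (orbit s x).
Proof.
rewrite /orbit; have := iter_order (@perm_inj _ s) x.
case: (order s x) (order_gt0 s x) => // k _ sk_x.
have map_traject y l : map s (traject s y l) = traject s (s y) l.
  by elim: l y => //= l IH y; rewrite IH.
by rewrite trajectS rot1_cons /= map_traject -trajectS trajectSr -iterSr sk_x.
Qed.

Section FconnectImage.
Variables (T U : finType) (s : T -> T) (g : U -> U) (f : T -> U).

Lemma fconnect_image :
  (forall z, fconnect g (f z) (f (s z))) ->
  forall x z, fconnect s x z -> fconnect g (f x) (f z).
Proof.
move=> step x z /iter_findex <-.
elim: (findex _ _ _) => [|k IH] /=; first exact: connect0.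
exact: connect_trans IH (step _).
Qed.

Lemma fconnect_preimage :
  (forall w, exists2 w', fconnect s w w' & f w' = g (f w)) ->
  forall x y, fconnect g (f x) y -> exists2 z, fconnect s x z & f z = y.
Proof.
move=> step x y /iter_findex <-.
elim: (findex _ _ _) => [|k [z xz fz]] /=; first by exists x; rewrite ?connect0.
have [w zw fw] := step z; exists w; first exact: connect_trans xz zw.
by rewrite fw fz.
Qed.

End FconnectImage.

(** * Ballot permutations *)

Definition step_shape (x y : nat) : bool * bool := (x < y, y < x).
Definition steps (w : seq nat) : seq (bool * bool) :=
  [seq step_shape p.1 p.2 | p <- adj_pairs w].
Definition steps_height (S : seq (bool * bool)) : int :=
  (Posz (count fst S) - Posz (count snd S))%R.
Definition nonneg_prefixes (S : seq (bool * bool)) : Prop :=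
  forall k, (0 <= steps_height (take k S))%R.
Definition peak : seq (bool * bool) := [:: (true, false); (false, true)].

Lemma steps_cons2 x y w : steps [:: x, y & w] = step_shape x y :: steps (y :: w).
Proof. by []. Qed.

Lemma des_steps w : des w = count snd (steps w).
Proof. by rewrite /des /steps count_map. Qed.

Lemma height_steps w : height w = steps_height (steps w).
Proof. by rewrite /height /steps_height /asc /des /steps !count_map. Qed.

Lemma steps_height_cat S T : steps_height (S ++ T) = (steps_height S + steps_height T)%R.
Proof. rewrite /steps_height !count_cat !PoszD; lia. Qed.

Lemma steps_take k w : steps (take k w) = take k.-1 (steps w).
Proof.
rewrite /steps -map_take; congr map.
have adj_cons2 a b t : adj_pairs [:: a, b & t] = (a, b) :: adj_pairs (b :: t) by [].
elim: w k => [|x [|y w] IH] [|[|k]] //.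
by rewrite [take _ _]/= !adj_cons2 /= (IH k.+1).
Qed.

Lemma size_steps w : size (steps w) = (size w).-1.
Proof. by case: w => [|x w] //; rewrite size_map size_zip /= minnE subKn. Qed.

Lemma ballotP w : ballot w <-> nonneg_prefixes (steps w).
Proof.
split=> [/forallP w_ballot k | steps_nonneg]; last first.
  by apply/forallP => k; rewrite height_steps steps_take.
have [lt_k | le_k] := ltnP k (size w).
  by have := w_ballot (Ordinal (lt_k : k.+1 < (size w).+1)); rewrite /= height_steps steps_take.
have := w_ballot ord_max; rewrite /= take_size height_steps take_oversize //.
by rewrite size_steps; lia.
Qed.

Lemma nonneg_prefixes_peak S T :
  nonneg_prefixes (S ++ peak ++ T) <-> nonneg_prefixes (S ++ T).
Proof.
have take_size_add U r : take (size S + r) (S ++ U) = S ++ take r U.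
  by rewrite takeD take_size_cat // drop_size_cat.
have peak_take r : take r.+2 (peak ++ T) = peak ++ take r T by [].
have height_peak : steps_height peak = 0%R by rewrite /steps_height /= subrr.
split=> nonneg k; have [lt_k | le_k] := ltnP k (size S);
  do ?by have := nonneg k; rewrite !take_cat lt_k.
all: rewrite -(subnKC le_k); move: (k - size S) => r.
  have := nonneg (size S + r.+2).
  by rewrite !take_size_add peak_take !steps_height_cat height_peak add0r.
have := nonneg (size S + 0); rewrite take_size_add take0 cats0 => nonneg_S.
rewrite take_size_add steps_height_cat.
case: r => [|[|r]]; try by move: nonneg_S; rewrite /steps_height /=; lia.
have := nonneg (size S + r); rewrite take_size_add peak_take steps_height_cat.
by rewrite steps_height_cat height_peak add0r.
Qed.

Lemma steps_cat a x c : steps (a ++ x :: c) = steps (rcons a x) ++ steps (x :: c).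
Proof.
elim: a => [|y [|z a] IH] //.
by rewrite /= !steps_cons2 IH.
Qed.

Lemma steps_rcons_eq a x y : {in a, forall z, step_shape z x = step_shape z y} ->
  steps (rcons a x) = steps (rcons a y).
Proof.
elim: a => [|z [|z' a] IH] // xy; first by rewrite /= !steps_cons2 xy ?mem_head.
rewrite !rcons_cons steps_cons2 -rcons_cons IH => [|t t_a]; last by rewrite xy // inE t_a orbT.
by rewrite rcons_cons steps_cons2.
Qed.

Lemma steps_cons_eq x y c : {in c, forall z, step_shape x z = step_shape y z} ->
  steps (x :: c) = steps (y :: c).
Proof. by case: c => [|z c] // xy; rewrite !steps_cons2 xy ?mem_head. Qed.

Lemma steps_map f s : {in s &, forall x y, (f x < f y) = (x < y)} -> steps (map f s) = steps s.
Proof.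
elim: s => [|x [|y s] IH] // f_mono.
rewrite map_cons map_cons steps_cons2 -map_cons IH => [|a b a_s b_s]; last first.
  by rewrite f_mono // inE ?a_s ?b_s orbT.
by rewrite steps_cons2 /step_shape !f_mono ?inE ?eqxx ?orbT.
Qed.

Section WordContraction.
Variables (q i j : nat).
Hypotheses (range_i : 0 < i <= q.+2) (range_j : 0 < j <= q.+2) (adj : (i == j.+1) || (j == i.+1)).

Let m := minn i j.

Lemma m_cases : ((i == m) && (j == m.+1)) || ((j == m) && (i == m.+1)).
Proof. by rewrite /m; case/orP: adj => /eqP; lia. Qed.

Definition squash (x : nat) : nat := if x <= m then x else x.-1.
Definition unsquash (y : nat) : nat := if y <= m then y else y.+1.

Definition contract_word (w : seq nat) : seq nat :=
  map squash (take (index i w) w ++ m :: drop (index i w).+3 w).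
Definition expand_word (u : seq nat) : seq nat :=
  map unsquash (take (index m u) u) ++ [:: i; q.+3; j]
    ++ map unsquash (drop (index m u).+1 u).

Ltac crunch := have := m_cases; rewrite /squash /unsquash; case_ifs; lia.

Lemma squashK y : squash (unsquash y) = y. Proof. crunch. Qed.
Lemma unsquashK x : x != m.+1 -> unsquash (squash x) = x. Proof. crunch. Qed.
Lemma squash_m : squash m = m. Proof. crunch. Qed.
Lemma ltn_squash x y : x != m.+1 -> y != m.+1 -> (squash x < squash y) = (x < y).
Proof. by move=> *; apply/idP/idP; crunch. Qed.
Lemma squash_inj x y : x != m.+1 -> y != m.+1 -> squash x = squash y -> x = y.
Proof. crunch. Qed.
Lemma step_shape_i z : z != i -> z != j -> step_shape z i = step_shape z m.
Proof. by move=> *; rewrite /step_shape; congr pair; apply/idP/idP; crunch. Qed.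
Lemma step_shape_j z : z != i -> z != j -> step_shape j z = step_shape m z.
Proof. by move=> *; rewrite /step_shape; congr pair; apply/idP/idP; crunch. Qed.

Lemma squash_eq_m z : (squash z == m) = (z == i) || (z == j).
Proof. by apply/eqP/orP; crunch. Qed.

Lemma neq_m1 z : z != i -> z != j -> z != m.+1.
Proof. by crunch. Qed.

Lemma contract_word_cat a c :
  i \notin a -> contract_word (a ++ [:: i; q.+3; j] ++ c) = map squash (a ++ m :: c).
Proof.
move=> i_a; rewrite /contract_word index_cat (negbTE i_a) /= eqxx addn0 take_size_cat //.
by rewrite -[[:: i, _, _ & c]]/([:: i; q.+3; j] ++ c) catA drop_size_cat // size_cat addn3.
Qed.

Lemma expand_word_cat a c :
  m \notin a -> expand_word (a ++ m :: c) = map unsquash a ++ [:: i; q.+3; j] ++ map unsquash c.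
Proof.
move=> m_a; rewrite /expand_word index_cat (negbTE m_a) /= eqxx addn0 take_size_cat //.
by rewrite -[m :: c]/([:: m] ++ c) catA drop_size_cat // size_cat addn1.
Qed.

Section ContractFactor.
Variables a c : seq nat.
Hypothesis w_perm : perm_eq (a ++ [:: i; q.+3; j] ++ c) (iota 1 q.+3).

Lemma factor_complement : uniq (a ++ c) /\
  {in a ++ c, forall z, [&& z != i, z != j, z != q.+3 & 0 < z <= q.+3]}.
Proof.
move: w_perm; rewrite perm_catCA perm_iota1E cat_uniq all_cat => /and3P[/and3P[_ ijn_ac uniq_ac] _].
move=> /andP[_ /allP range_ac]; split=> // z z_ac.
have := hasPn ijn_ac z z_ac; rewrite !inE !negb_or => /and3P[-> -> ->].
exact: range_ac.
Qed.

Lemma contract_factorE :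
  contract_word (a ++ [:: i; q.+3; j] ++ c) = map squash (a ++ m :: c).
Proof.
apply: contract_word_cat; move: (perm_uniq w_perm); rewrite iota_uniq uniq_mid.
by rewrite mem_cat negb_or => /andP[/andP[]].
Qed.

Let uniq_ac := proj1 factor_complement.
Let range_ac := proj2 factor_complement.

Lemma m_notin_factor : m \notin a ++ c.
Proof. by apply/negP => /range_ac /and4P[zi zj _ _]; move: zi zj; have := m_cases; lia. Qed.

Lemma contracted_factor_neq_m1 : {in a ++ m :: c, forall z, z != m.+1}.
Proof.
move=> z; rewrite mem_cat inE orbCA => /orP[/eqP -> | ]; first by rewrite ltn_eqF.
by rewrite -mem_cat => /range_ac /and4P[zi zj _ _]; apply: neq_m1.
Qed.

Lemma contract_factor_perm : perm_eq (map squash (a ++ m :: c)) (iota 1 q.+1).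
Proof.
rewrite perm_iota1E size_map !size_cat /= map_inj_in_uniq; last first.
  by move=> x y /contracted_factor_neq_m1 xm /contracted_factor_neq_m1; apply: squash_inj.
rewrite uniq_mid m_notin_factor uniq_ac /=.
have := perm_size w_perm; rewrite !size_cat size_iota /= => size_w.
apply/andP; split; first by apply/eqP; lia.
apply/allP => _ /mapP[z + ->]; rewrite mem_cat inE orbCA => /orP[/eqP -> | ].
  by rewrite squash_m; have := m_cases; lia.
rewrite -mem_cat => /range_ac /and4P[zi zj zn range_z].
by move: zi zj zn; rewrite /squash; have := m_cases; case_ifs; lia.
Qed.

Lemma expand_contract_factor :
  expand_word (map squash (a ++ m :: c)) = a ++ [:: i; q.+3; j] ++ c.
Proof.
have squash_a : m \notin map squash a.
  apply/mapP => -[z z_a /esym/eqP]; rewrite squash_eq_m.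
  by have /range_ac/and4P[/negbTE-> /negbTE-> _ _] : z \in a ++ c by rewrite mem_cat z_a.
rewrite map_cat /= squash_m expand_word_cat // -!map_comp !map_id_in // => z z_c /=;
  apply: unsquashK; apply: contracted_factor_neq_m1; rewrite mem_cat inE ?z_c ?orbT //.
Qed.

Lemma steps_factor :
  steps (a ++ [:: i; q.+3; j] ++ c) = steps (rcons a m) ++ peak ++ steps (m :: c).
Proof.
have in_ac z : z \in a ++ c -> (z != i) && (z != j) by move=> /range_ac /and4P[-> -> _ _].
have up : step_shape i q.+3 = (true, false) by rewrite /step_shape; congr pair; lia.
have down : step_shape q.+3 j = (false, true) by rewrite /step_shape; congr pair; lia.
rewrite steps_cat !steps_cons2 up down (@steps_rcons_eq _ i m) => [|z z_a]; last first.
  have /andP[zi zj] : (z != i) && (z != j) by rewrite in_ac // mem_cat z_a.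
  exact: step_shape_i.
rewrite (@steps_cons_eq j m) // => z z_c.
have /andP[zi zj] : (z != i) && (z != j) by rewrite in_ac // mem_cat z_c orbT.
exact: step_shape_j.
Qed.

Lemma steps_contract_factor :
  steps (map squash (a ++ m :: c)) = steps (rcons a m) ++ steps (m :: c).
Proof.
rewrite steps_map ?steps_cat // => x y /contracted_factor_neq_m1 xm /contracted_factor_neq_m1.
exact: ltn_squash.
Qed.

End ContractFactor.

Section ExpandFactor.
Variables a c : seq nat.
Hypothesis u_perm : perm_eq (a ++ m :: c) (iota 1 q.+1).

Lemma expanded_factor_range : {in a ++ c, forall z,
  [&& unsquash z != i, unsquash z != j, unsquash z != q.+3 & 0 < unsquash z <= q.+3]}.
Proof.
move: u_perm; rewrite perm_iota1E uniq_mid => /and3P[/andP[m_ac _] _ /allP range_u] z z_ac.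
have zm : z != m by apply: contraNneq m_ac => <-.
have : 0 < z <= q.+1.
  by apply: range_u; move: z_ac; rewrite !mem_cat inE => /orP[] ->; rewrite ?orbT.
by move: zm; rewrite /unsquash; have := m_cases; case_ifs; lia.
Qed.

Lemma expand_factorE :
  expand_word (a ++ m :: c) = map unsquash a ++ [:: i; q.+3; j] ++ map unsquash c.
Proof.
apply: expand_word_cat; move: (perm_uniq u_perm); rewrite iota_uniq uniq_mid.
by rewrite mem_cat negb_or => /andP[/andP[]].
Qed.

Lemma expand_factor_perm :
  perm_eq (map unsquash a ++ [:: i; q.+3; j] ++ map unsquash c) (iota 1 q.+3).
Proof.
rewrite perm_catCA -map_cat perm_iota1E.
move: u_perm; rewrite perm_iota1E uniq_mid => /and3P[/andP[_ uniq_ac] /eqP size_u _].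
have uniq_ijn : uniq [:: i; q.+3; j] by rewrite /= !inE; have := m_cases; lia.
have disjoint_ijn : ~~ has (mem [:: i; q.+3; j]) (map unsquash (a ++ c)).
  apply/hasPn => _ /mapP[z /expanded_factor_range/and4P[zi zj zn _] ->].
  by rewrite !inE !negb_or zi zj zn.
have range_w : all (fun v => 0 < v <= q.+3) ([:: i; q.+3; j] ++ map unsquash (a ++ c)).
  rewrite all_cat; apply/andP; split; first by rewrite /=; have := m_cases; lia.
  by apply/allP => _ /mapP[z /expanded_factor_range/and4P[_ _ _ range_z] ->].
rewrite cat_uniq (map_inj_uniq (can_inj squashK)) uniq_ijn disjoint_ijn uniq_ac range_w.
rewrite size_cat size_map /=.
by move: size_u; rewrite !size_cat /= andbT; lia.
Qed.

Lemma contract_expand_factor :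
  contract_word (map unsquash a ++ [:: i; q.+3; j] ++ map unsquash c) = a ++ m :: c.
Proof.
rewrite contract_word_cat; last first.
  apply/mapP => -[z z_a iE].
  have /expanded_factor_range/and4P[+ _ _ _] : z \in a ++ c by rewrite mem_cat z_a.
  by rewrite -iE eqxx.
by rewrite map_cat /= squash_m -!map_comp !(eq_map squashK) !map_id.
Qed.

End ExpandFactor.

Lemma contract_word_spec w : perm_eq w (iota 1 q.+3) -> infix [:: i; q.+3; j] w ->
  [/\ perm_eq (contract_word w) (iota 1 q.+1), expand_word (contract_word w) = w,
      des w = (des (contract_word w)).+1 & ballot w = ballot (contract_word w)].
Proof.
move=> w_perm /infixP[a [c w_ac]]; subst w; rewrite contract_factorE //.
split; [exact: contract_factor_perm | exact: expand_contract_factor | | ].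
  by rewrite !des_steps steps_factor // steps_contract_factor // !count_cat addnCA add1n.
have := nonneg_prefixes_peak (steps (rcons a m)) (steps (m :: c)).
rewrite -steps_factor // -steps_contract_factor // => peakE.
by apply/idP/idP => /ballotP/peakE/ballotP.
Qed.

Lemma expand_word_spec u : perm_eq u (iota 1 q.+1) ->
  [/\ perm_eq (expand_word u) (iota 1 q.+3), infix [:: i; q.+3; j] (expand_word u)
    & contract_word (expand_word u) = u].
Proof.
move=> u_perm; have m_u : m \in u by rewrite (perm_mem u_perm) mem_iota; have := m_cases; lia.
move: u_perm; case/splitPr: m_u => a c u_perm.
rewrite expand_factorE //; split; [exact: expand_factor_perm | | exact: contract_expand_factor].
by apply/infixP; exists (map unsquash a), (map unsquash c).
Qed.

Lemma b_ij_contract d : b_ij q.+3 d i j = b q.+1 (d - 1)%R.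
Proof.
rewrite /b_ij /b /perms_of; apply: (@count_bijection _ _ _ _ _ _ contract_word expand_word).
- exact: permutations_uniq.
- exact: permutations_uniq.
- move=> w; rewrite mem_permutations => w_perm /and3P[w_ballot w_des w_factor].
  have [u_perm wK des_w ballot_w] := contract_word_spec w_perm w_factor.
  by rewrite mem_permutations u_perm -ballot_w w_ballot -eq_PoszS -des_w w_des wK.
move=> u; rewrite mem_permutations => u_perm /andP[u_ballot u_des].
have [w_perm w_factor uK] := expand_word_spec u_perm.
have [_ _ des_w ballot_w] := contract_word_spec w_perm w_factor.
by rewrite mem_permutations w_perm ballot_w des_w uK u_ballot eq_PoszS u_des w_factor.
Qed.

End WordContraction.

(** * Odd order permutations *)

Section CycleStatistics.
Variables (n : nat) (s : {perm 'I_n}) (x : 'I_n).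

Lemma cdes_cycle_of : cdes (cycle_of s x) = #|[pred z | fconnect s x z & s z < z]|.
Proof.
rewrite /cdes /cycle_of -map_rot rot1_orbit -map_comp zip_map count_map.
rewrite count_uniq_card ?orbit_uniq //; apply: eq_card => z.
by rewrite !inE /= ltnS fconnect_orbit.
Qed.

Lemma casc_cycle_of : casc (cycle_of s x) = #|[pred z | fconnect s x z & z < s z]|.
Proof.
rewrite /casc /cycle_of -map_rot rot1_orbit -map_comp zip_map count_map.
rewrite count_uniq_card ?orbit_uniq //; apply: eq_card => z.
by rewrite !inE /= ltnS fconnect_orbit.
Qed.

Lemma size_cycle_of : size (cycle_of s x) = #|fconnect s x|.
Proof. by rewrite /cycle_of size_map size_orbit. Qed.

End CycleStatistics.

Lemma sum_cycle_rep_fconnect n (s : {perm 'I_n}) (k : 'I_n) :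
  \sum_(y | cycle_rep s y) (fconnect s y k : nat) = 1.
Proof.
rewrite -big_mkcondr sum1dep_card.
have [r kr r_min] := arg_minnP (fun z : 'I_n => val z) (connect0 (frel s) k).
have fsym := fconnect_sym (@perm_inj _ s).
apply: (@eq_card1 _ r) => y; rewrite !inE; apply/andP/eqP => [[/forallP rep yk] | ->].
  apply/val_inj/eqP; rewrite eqn_leq.
  by have := rep r; rewrite (connect_trans yk kr) /= => ->; apply: r_min; rewrite fsym.
rewrite fsym kr; split=> //; apply/forallP => z; apply/implyP => rz.
by rewrite r_min // (connect_trans kr rz).
Qed.

Section PermContraction.
Variables (q i0 j0 : nat).
Hypotheses (le_i0 : i0 <= q.+1) (le_j0 : j0 <= q.+1) (adj : (i0 == j0.+1) || (j0 == i0.+1)).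

Let m0 := minn i0 j0.

Lemma m0_cases : ((i0 == m0) && (j0 == m0.+1)) || ((j0 == m0) && (i0 == m0.+1)).
Proof. by rewrite /m0; case/orP: adj => /eqP; lia. Qed.

Let I0 : 'I_q.+3 := inord i0.
Let J0 : 'I_q.+3 := inord j0.
Let N0 : 'I_q.+3 := ord_max.
Let M0 : 'I_q.+3 := inord m0.
Let K : 'I_q.+1 := inord m0.
(* Letters are shifted down by one: I0, J0, N0 are i, j, n and M0 is the smaller of I0, J0;
   K is the letter min(i, j) of the contracted permutation. *)

Definition contr (z : 'I_q.+3) : 'I_q.+1 :=
  inord (if z <= m0 then z : nat else if z <= q.+1 then z.-1 else m0).
Definition uncontr (t : 'I_q.+3) (y : 'I_q.+1) : 'I_q.+3 :=
  inord (if y < m0 then y : nat else if y == m0 :> nat then t : nat else y.+1).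

Let I0E : (I0 : nat) = i0. Proof. by rewrite /I0 inordK; lia. Qed.
Let J0E : (J0 : nat) = j0. Proof. by rewrite /J0 inordK; lia. Qed.
Let KE : (K : nat) = m0. Proof. by rewrite /K inordK; have := m0_cases; lia. Qed.
Let contrE z : (contr z : nat) = if z <= m0 then z : nat else if z <= q.+1 then z.-1 else m0.
Proof. by rewrite /contr inordK //; have := m0_cases; have := ltn_ord z; case_ifs; lia. Qed.
Let uncontrE t y :
  (uncontr t y : nat) = if y < m0 then y : nat else if y == m0 :> nat then t : nat else y.+1.
Proof.
rewrite /uncontr inordK //.
by have := m0_cases; have := ltn_ord t; have := ltn_ord y; case_ifs; lia.
Qed.

Definition collapsed (z : 'I_q.+3) := [|| z == I0, z == J0 | z == N0].

Ltac unfold_vals := rewrite -?val_eqE /= ?(I0E, J0E, KE, uncontrE, contrE) /=.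
Ltac crunch := have := m0_cases; case_ifs; lia.

Lemma contr_eq_K z : (contr z == K) = collapsed z.
Proof. rewrite /collapsed; have := ltn_ord z; unfold_vals; crunch. Qed.

Lemma contr_uncontr t y : collapsed t -> contr (uncontr t y) = y.
Proof.
rewrite /collapsed => ht; apply: val_inj; move: ht; have := ltn_ord y; have := ltn_ord t.
unfold_vals; crunch.
Qed.

Lemma uncontr_contr t z : collapsed t -> t != N0 -> ~~ collapsed z || (z == t) ->
  uncontr t (contr z) = z.
Proof.
rewrite /collapsed => ht htN hz; apply: val_inj; move: ht htN hz.
have := ltn_ord z; have := ltn_ord t; unfold_vals; crunch.
Qed.

Lemma collapsed_M0 : collapsed M0.
Proof. rewrite /collapsed /M0; unfold_vals; rewrite inordK; crunch. Qed.

Lemma M0_neq_N0 : M0 != N0.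
Proof. rewrite /M0; unfold_vals; rewrite inordK; crunch. Qed.

Lemma uncontr_neq_N0 t y : t != N0 -> uncontr t y != N0.
Proof. have := ltn_ord t; have := ltn_ord y; unfold_vals; crunch. Qed.

Lemma uncontr_M0_leq y w : w != N0 -> (uncontr M0 y <= w) = (y <= contr w).
Proof.
rewrite /M0; have := ltn_ord y; have := ltn_ord w; unfold_vals; rewrite inordK.
  by move=> *; apply/idP/idP; crunch.
by crunch.
Qed.

Lemma contr_ltn z w : z != N0 -> w != N0 -> ~~ (collapsed z && collapsed w) ->
  (contr z < contr w) = (z < w).
Proof.
rewrite /collapsed; have := ltn_ord z; have := ltn_ord w; unfold_vals.
by move=> *; apply/idP/idP; crunch.
Qed.

Lemma I0_neq_J0 : I0 != J0. Proof. unfold_vals; crunch. Qed.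
Lemma I0_neq_N0 : I0 != N0. Proof. unfold_vals; crunch. Qed.
Lemma J0_neq_N0 : J0 != N0. Proof. unfold_vals; crunch. Qed.
Lemma collapsed_I0 : collapsed I0. Proof. by rewrite /collapsed eqxx. Qed.
Lemma collapsed_J0 : collapsed J0. Proof. by rewrite /collapsed eqxx orbT. Qed.
Lemma collapsed_N0 : collapsed N0. Proof. by rewrite /collapsed eqxx !orbT. Qed.
Lemma contr_collapsed z : collapsed z -> contr z = K.
Proof. by rewrite -contr_eq_K => /eqP. Qed.

Lemma uncontr_collapsed t y : collapsed t -> collapsed (uncontr t y) = (y == K).
Proof. by move=> ct; rewrite -contr_eq_K contr_uncontr. Qed.

Lemma uncontr_K t : uncontr t K = t.
Proof. by apply: val_inj; unfold_vals; rewrite eqxx ltnn. Qed.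

Lemma uncontr_neq t y z : collapsed t -> collapsed z -> z != t -> uncontr t y != z.
Proof.
move=> ct cz; apply: contraNneq => uncontr_z.
suff yK : y = K by rewrite -uncontr_z yK uncontr_K.
by rewrite -(contr_uncontr y ct) uncontr_z contr_collapsed.
Qed.

Lemma uncontr_I0_contr z : z != J0 -> z != N0 -> uncontr I0 (contr z) = z.
Proof.
move=> zJ zN; apply: uncontr_contr collapsed_I0 I0_neq_N0 _.
by rewrite /collapsed (negbTE zJ) (negbTE zN) !orbF orNb.
Qed.

Lemma uncontr_J0_contr z : z != I0 -> z != N0 -> uncontr J0 (contr z) = z.
Proof.
move=> zI zN; apply: uncontr_contr collapsed_J0 J0_neq_N0 _.
by rewrite /collapsed (negbTE zI) (negbTE zN) /= orbF orNb.
Qed.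

Lemma uncontr_I0_neq y : (uncontr I0 y != J0) && (uncontr I0 y != N0).
Proof.
by rewrite !uncontr_neq ?collapsed_I0 ?collapsed_J0 ?collapsed_N0 // eq_sym ?I0_neq_J0 ?I0_neq_N0.
Qed.

Lemma uncontr_J0_neq y : (uncontr J0 y != I0) && (uncontr J0 y != N0).
Proof.
by rewrite !uncontr_neq ?collapsed_I0 ?collapsed_J0 ?collapsed_N0 ?I0_neq_J0 // eq_sym J0_neq_N0.
Qed.

Lemma contr_inj_uncollapsed z w : ~~ collapsed z -> contr w = contr z -> w = z.
Proof.
move=> ncz cw_z; have ncw : ~~ collapsed w by rewrite -contr_eq_K cw_z contr_eq_K.
have inv v : ~~ collapsed v -> uncontr I0 (contr v) = v.
  by move=> ncv; rewrite uncontr_contr ?collapsed_I0 ?I0_neq_N0 ?ncv.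
by rewrite -(inv w ncw) -(inv z ncz) cw_z.
Qed.

Lemma I0_lt_N0 : I0 < N0. Proof. by unfold_vals; lia. Qed.
Lemma J0_lt_N0 : J0 < N0. Proof. by unfold_vals; lia. Qed.

Lemma uncontr_I0_inj : injective (uncontr I0).
Proof. exact: (can_inj (fun y => contr_uncontr y collapsed_I0)). Qed.

Lemma card_contr (A : {pred 'I_q.+3}) (B : {pred 'I_q.+1}) :
  (forall z, ~~ collapsed z -> (z \in A) = (contr z \in B)) ->
  #|A| + (K \in B) = #|B| + (I0 \in A) + (J0 \in A) + (N0 \in A).
Proof.
move=> AB.
have uncollapsedE : #|[predD A & [pred z | collapsed z]]| = #|[predD1 B & K]|.
  rewrite -(card_image uncontr_I0_inj); apply: eq_card => z; rewrite !inE.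
  apply/andP/imageP => [[ncz Az] | [y /andP[yK By] ->]].
    exists (contr z); last by rewrite uncontr_contr ?collapsed_I0 ?I0_neq_N0 ?ncz.
    by rewrite !inE -AB // contr_eq_K ncz.
  rewrite uncontr_collapsed ?collapsed_I0 // yK AB ?uncontr_collapsed ?collapsed_I0 //.
  by rewrite contr_uncontr ?collapsed_I0.
have collapsedE :
    #|[predI A & [pred z | collapsed z]]| = (I0 \in A) + (J0 \in A) + (N0 \in A).
  have uniq3 : uniq [:: I0; J0; N0].
    by rewrite /= !inE negb_or I0_neq_J0 I0_neq_N0 J0_neq_N0.
  have := count_uniq_card (mem A) uniq3; rewrite /= addn0 addnA => ->.
  by apply: eq_card => z; rewrite !inE andbC.
have -> : #|B| = (K \in B) + #|[predD1 B & K]| := cardD1 K B.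
rewrite -(cardID [pred z | collapsed z] A) uncollapsedE collapsedE; lia.
Qed.

Section Expansion.
Variable s' : {perm 'I_q.+1}.

Definition expand_fun (z : 'I_q.+3) : 'I_q.+3 :=
  if z == I0 then N0 else if z == N0 then J0 else uncontr I0 (s' (contr z)).

Lemma expand_fun_inj : injective expand_fun.
Proof.
pose g v := if v == N0 then I0 else if v == J0 then N0 else uncontr J0 ((s'^-1)%g (contr v)).
apply: (@can_inj _ _ _ g) => z; rewrite /expand_fun /g.
have [->|zI] := eqVneq z I0; first by rewrite eqxx.
have [->|zN] := eqVneq z N0; first by rewrite (negbTE J0_neq_N0) eqxx.
case/andP: (uncontr_I0_neq (s' (contr z))) => /negbTE -> /negbTE ->.
by rewrite contr_uncontr ?collapsed_I0 // permK uncontr_J0_contr.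
Qed.

Definition expand_perm : {perm 'I_q.+3} := perm expand_fun_inj.

Local Notation s := expand_perm.

Lemma expand_I0 : s I0 = N0.
Proof. by rewrite permE /expand_fun eqxx. Qed.

Lemma expand_N0 : s N0 = J0.
Proof. by rewrite permE /expand_fun eqxx eq_sym (negbTE I0_neq_N0). Qed.

Lemma expand_other z : z != I0 -> z != N0 -> s z = uncontr I0 (s' (contr z)).
Proof. by move=> zI zN; rewrite permE /expand_fun (negbTE zI) (negbTE zN). Qed.

Lemma contr_expand z : z != I0 -> z != N0 -> contr (s z) = s' (contr z).
Proof. by move=> zI zN; rewrite expand_other // contr_uncontr ?collapsed_I0. Qed.

Lemma expand_J0 : s J0 = uncontr I0 (s' K).
Proof.
by rewrite expand_other ?contr_collapsed ?collapsed_J0 ?J0_neq_N0 // eq_sym I0_neq_J0.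
Qed.

Lemma contr_expand_J0 : contr (s J0) = s' K.
Proof. by rewrite expand_J0 contr_uncontr ?collapsed_I0. Qed.

Lemma fconnect_collapsed z w : collapsed z -> collapsed w -> fconnect s z w.
Proof.
have I0_N0 : fconnect s I0 N0 by rewrite -expand_I0 fconnect1.
have N0_J0 : fconnect s N0 J0 by rewrite -expand_N0 fconnect1.
have from_I0 v : collapsed v -> fconnect s I0 v.
  by case/or3P=> /eqP->; rewrite ?connect0 ?I0_N0 ?(connect_trans I0_N0 N0_J0).
move=> /from_I0 I0_z /from_I0 I0_w.
by rewrite (fconnect_sym (@perm_inj _ s)) in I0_z; apply: connect_trans I0_z I0_w.
Qed.

Lemma fconnect_expand x z : fconnect s x z = fconnect s' (contr x) (contr z).
Proof.
apply/idP/idP.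
  apply: fconnect_image => w.
  have [wI|] := boolP ((w == I0) || (w == N0)); last first.
    by rewrite negb_or => /andP[wI wN]; rewrite contr_expand // fconnect1.
  suff [cw csw] : collapsed w /\ collapsed (s w) by rewrite !contr_collapsed ?connect0.
  case/orP: wI => /eqP->; rewrite ?expand_I0 ?expand_N0;
    by rewrite ?collapsed_I0 ?collapsed_N0 ?collapsed_J0.
have step w : exists2 w', fconnect s w w' & contr w' = s' (contr w).
  have [wIN|] := boolP ((w == I0) || (w == N0)); last first.
    by rewrite negb_or => /andP[wI wN]; exists (s w); rewrite ?fconnect1 ?contr_expand.
  have cw : collapsed w by case/orP: wIN => /eqP->; rewrite ?collapsed_I0 ?collapsed_N0.
  exists (s J0); last by rewrite contr_expand_J0 contr_collapsed.
  exact: connect_trans (fconnect_collapsed cw collapsed_J0) (fconnect1 _ _).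
case/(fconnect_preimage step) => w xw cw_z.
have [cz|ncz] := boolP (collapsed z).
  apply: connect_trans xw (fconnect_collapsed _ cz).
  by rewrite -contr_eq_K cw_z contr_eq_K.
by rewrite -(contr_inj_uncollapsed ncz cw_z).
Qed.

Lemma fconnect_expand_collapsed x z :
  collapsed z -> fconnect s x z = fconnect s' (contr x) K.
Proof. by move=> cz; rewrite fconnect_expand (contr_collapsed cz). Qed.

Lemma card_cycle_expand x :
  #|fconnect s x| = #|fconnect s' (contr x)| + 2 * fconnect s' (contr x) K.
Proof.
have : #|fconnect s x| + fconnect s' (contr x) K =
    #|fconnect s' (contr x)| + fconnect s x I0 + fconnect s x J0 + fconnect s x N0.
  exact: card_contr (fun z _ => fconnect_expand x z).
by rewrite !fconnect_expand_collapsed ?collapsed_I0 ?collapsed_J0 ?collapsed_N0 //; lia.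
Qed.

Lemma card_cycle_steps_expand x (r : rel nat) :
    (forall a b, a != N0 -> b != N0 -> ~~ (collapsed a && collapsed b) ->
       r (contr a) (contr b) = r a b) ->
  let k := fconnect s' (contr x) K in
  #|[pred z | fconnect s x z & r (s z) z]| + (k && r (s' K) K) =
  #|[pred y | fconnect s' (contr x) y & r (s' y) y]|
    + (k && r N0 I0) + (k && r (s J0) J0) + (k && r J0 N0).
Proof.
move=> r_contr k.
have := @card_contr [pred z | fconnect s x z & r (s z) z]
  [pred y | fconnect s' (contr x) y & r (s' y) y].
rewrite !inE !fconnect_expand_collapsed ?collapsed_I0 ?collapsed_J0 ?collapsed_N0 //.
rewrite expand_I0 expand_N0; apply=> z ncz.
have /and3P[zI _ zN] : [&& z != I0, z != J0 & z != N0] by rewrite -!negb_or.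
have sz_N0 : s z != N0 by rewrite -expand_I0 (inj_eq perm_inj).
by rewrite !inE fconnect_expand -contr_expand ?r_contr ?(negbTE ncz) ?andbF.
Qed.

Lemma cweight_cycle_expand x :
  cweight_cycle (cycle_of s x) = cweight_cycle (cycle_of s' (contr x)) + fconnect s' (contr x) K.
Proof.
have gtn_contr a b : a != N0 -> b != N0 -> ~~ (collapsed a && collapsed b) ->
    contr b < contr a = (b < a).
  by move=> aN bN ab; rewrite contr_ltn // andbC.
have := @card_cycle_steps_expand x (fun a b => a < b) contr_ltn.
have := @card_cycle_steps_expand x (fun a b => b < a) gtn_contr.
rewrite /cweight_cycle !cdes_cycle_of !casc_cycle_of /=.
set desA := #|[pred z | fconnect s x z & s z < z]|.
set ascA := #|[pred z | fconnect s x z & z < s z]|.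
set desB := #|[pred y | fconnect s' (contr x) y & s' y < y]|.
set ascB := #|[pred y | fconnect s' (contr x) y & y < s' y]|.
rewrite I0_lt_N0 J0_lt_N0 (leq_gtF (ltnW I0_lt_N0)) (leq_gtF (ltnW J0_lt_N0)) /=.
case: (boolP (fconnect s' (contr x) K)) => [xK|nxK] /=; last by rewrite ?(negbTE nxK) /=; lia.
rewrite expand_J0; have [s'K|s'K] := eqVneq (s' K) K.
  (* the cycle (i n j) contracts to the fixed point K *)
  have in_cycle y : fconnect s' (contr x) y -> y = K.
    rewrite (fconnect_sym (@perm_inj _ s')) in xK.
    by move=> /(connect_trans xK) /iter_findex <-; rewrite iter_fix.
  have noB (r : rel nat) : irreflexive r ->
      #|[pred y | fconnect s' (contr x) y & r (s' y) y]| = 0.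
    move=> irr; apply: eq_card0 => y; rewrite !inE.
    by apply/andP => -[/in_cycle ->]; rewrite s'K irr.
  have desB0 : desB = 0 := noB (fun a b => a < b) ltnn.
  have ascB0 : ascB = 0 := noB (fun a b => b < a) ltnn.
  have := I0_neq_J0; rewrite -val_eqE /= => I0J0.
  by rewrite s'K uncontr_K ltnn desB0 ascB0; lia.
have nc_sJ0 : collapsed (uncontr I0 (s' K)) = false.
  by rewrite uncontr_collapsed ?collapsed_I0 // (negbTE s'K).
rewrite -!contr_ltn ?uncontr_neq_N0 ?J0_neq_N0 ?I0_neq_N0 ?nc_sJ0 ?andbF //.
rewrite contr_uncontr ?collapsed_I0 // (contr_collapsed collapsed_J0); lia.
Qed.

Lemma cycle_rep_expand x :
  cycle_rep s x = (uncontr M0 (contr x) == x) && cycle_rep s' (contr x).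
Proof.
have uncontr_M0_N0 y : uncontr M0 y != N0 by rewrite uncontr_neq_N0 ?M0_neq_N0.
apply/forallP/andP => [rep | [/eqP xE /forallP rep'] y].
  have xN : x != N0.
    apply: contraTneq (rep I0) => ->.
    by rewrite fconnect_collapsed ?collapsed_I0 ?collapsed_N0 //= leqNgt I0_lt_N0.
  have cyc_uncontr y : fconnect s x (uncontr M0 y) = fconnect s' (contr x) y.
    by rewrite fconnect_expand contr_uncontr ?collapsed_M0.
  have xE : uncontr M0 (contr x) = x.
    apply/val_inj/eqP; rewrite eqn_leq uncontr_M0_leq // leqnn /=.
    by have := rep (uncontr M0 (contr x)); rewrite cyc_uncontr connect0.
  split; first exact/eqP.
  apply/forallP => y; apply/implyP => xy.
  have := rep (uncontr M0 y); rewrite cyc_uncontr xy -{1}xE uncontr_M0_leq //.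
  by rewrite contr_uncontr ?collapsed_M0.
apply/implyP => xy; have [->|yN] := eqVneq y N0; first exact: leq_ord.
by rewrite -xE uncontr_M0_leq // (implyP (rep' (contr y))) // -fconnect_expand.
Qed.

Lemma cweight_expand : cweight s = (cweight s').+1.
Proof.
rewrite /cweight (reindex_onto (uncontr M0) contr); last first.
  by move=> x; rewrite cycle_rep_expand => /andP[/eqP].
rewrite (eq_bigl (cycle_rep s')); last first.
  by move=> y; rewrite cycle_rep_expand contr_uncontr ?collapsed_M0 // !eqxx andbT.
rewrite (eq_bigr (fun y => cweight_cycle (cycle_of s' y) + fconnect s' y K)); last first.
  by move=> y _; rewrite cweight_cycle_expand contr_uncontr ?collapsed_M0.
by rewrite big_split /= sum_cycle_rep_fconnect addn1.
Qed.

Lemma odd_size_cycle_expand x :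
  odd (size (cycle_of s x)) = odd (size (cycle_of s' (contr x))).
Proof. by rewrite !size_cycle_of card_cycle_expand oddD oddM addbF. Qed.

Lemma odd_order_expand : odd_order s = odd_order s'.
Proof.
apply/forallP/forallP => odd_cycles y; last by rewrite odd_size_cycle_expand.
by rewrite -(contr_uncontr y collapsed_I0) -odd_size_cycle_expand.
Qed.

End Expansion.

Lemma expand_perm_inj : injective expand_perm.
Proof.
move=> s1 s2 s12; apply/permP => y.
have := congr1 (fun s : {perm _} => s (uncontr J0 y)) s12 => /=.
case/andP: (uncontr_J0_neq y) => yI yN.
by rewrite !expand_other // contr_uncontr ?collapsed_J0 // => /uncontr_I0_inj.
Qed.

Lemma expand_perm_surj (s : {perm 'I_q.+3}) :
  s I0 = N0 -> s N0 = J0 -> exists s', s = expand_perm s'.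
Proof.
move=> sI sN.
have s_neq z : z != I0 -> z != N0 -> (s z != J0) && (s z != N0).
  by move=> zI zN; rewrite -sN (inj_eq perm_inj) zN -sI (inj_eq perm_inj) zI.
pose f y := contr (s (uncontr J0 y)).
have f_inj : injective f.
  apply: (@can_inj _ _ _ (fun y => contr ((s^-1)%g (uncontr I0 y)))) => y; rewrite /f.
  case/andP: (uncontr_J0_neq y) => yI yN; case/andP: (s_neq _ yI yN) => sJ sN'.
  by rewrite uncontr_I0_contr // permK contr_uncontr ?collapsed_J0.
exists (perm f_inj); apply/permP => z.
have [->|zI] := eqVneq z I0; first by rewrite expand_I0.
have [->|zN] := eqVneq z N0; first by rewrite expand_N0.
case/andP: (s_neq _ zI zN) => sJ sN'.
by rewrite expand_other // permE /f uncontr_J0_contr // uncontr_I0_contr.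
Qed.

Lemma cyc_factor_expandE (s : {perm 'I_q.+3}) :
  cyc_factor s i0.+1 j0.+1 = (s I0 == N0) && (s N0 == J0).
Proof.
apply/existsP/andP => [[x /existsP[y /and4P[/eqP[xE] /eqP[yE] /eqP sx /eqP[sy]]]] | [sI sN]].
  have xI : x = I0 by apply: val_inj; rewrite /= I0E.
  have yN : y = N0 by apply: val_inj.
  by rewrite -xI sx -yN eqxx; split=> //; apply/eqP/val_inj; rewrite /= J0E.
exists I0; apply/existsP; exists N0.
by rewrite /= (eqP sI) (eqP sN) I0E J0E !eqxx.
Qed.

Lemma p_ij_contract d : p_ij q.+3 d i0.+1 j0.+1 = p q.+1 (d - 1)%R.
Proof.
rewrite /p_ij /p -(card_imset _ expand_perm_inj); apply: eq_card => s.
rewrite !inE cyc_factor_expandE; apply/idP/imsetP.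
  case/and3P=> odd_s ws /andP[/eqP sI /eqP sN]; have [s' s_exp] := expand_perm_surj sI sN.
  by exists s'; rewrite // inE -odd_order_expand -s_exp odd_s -eq_PoszS -cweight_expand -s_exp.
case=> s'; rewrite inE => /andP[odd_s' ws'] ->.
by rewrite odd_order_expand odd_s' cweight_expand eq_PoszS ws' expand_I0 expand_N0 !eqxx.
Qed.

End PermContraction.

Theorem lemma2p1 (n : nat) (d : int) (i j : nat) :
  3 <= n -> 1 <= i <= n.-1 -> 1 <= j <= n.-1 -> (i == j.+1) || (j == i.+1) ->
  b_ij n d i j = b (n - 2) (d - 1)%R /\ p_ij n d i j = p (n - 2) (d - 1)%R.
Proof.
case: n => [|[|[|q]]] // _ /= range_i range_j adj; rewrite subn2 /=.
split; first exact: b_ij_contract.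
have [-> ->] : i = i.-1.+1 /\ j = j.-1.+1 by lia.
by apply: p_ij_contract; lia.
Qed.
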